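(* Let $x=(B_1,B_2,i,j)\in\mathbf M_{V,W}$ and $x'=(B_1',B_2',i',j')\in\mathbf M_{V',W'}$ be such that $B_1$ and $B_1'$ have no common eigenvalue. If $x$ and $x'$ are both stable (resp. both costable), then $\mathsf T(x,x')$ is stable (resp. costable).
   Context: For vector spaces $V,W$, $\mathbf M_{V,W}=\mathrm{End}(V)^{\oplus2}\oplus\mathrm{Hom}(W,V)\oplus\mathrm{Hom}(V,W)$. A datum $(B_1,B_2,i,j)$ is stable if no proper subspace of $V$ containing $\mathrm{Im}(i)$ is invariant under $B_1,B_2$, and costable if no nonzero subspace of $\mathrm{Ker}(j)$ is invariant under $B_1,B_2$. Let $\widetilde V=V\otimes W'\oplus W\otimes V'$, $\widetilde W=W\otimes W'$. When $B_1,B_1'$ have no common eigenvalue, $\mathsf T(x,x')\in\mathbf M_{\widetilde V,\widetilde W}$ is $$\Bigl(\begin{pmatrix}B_1\otimes\mathrm{Id}_{W'}&0\\0&\mathrm{Id}_W\otimes B_1'\end{pmatrix},\begin{pmatrix}B_2\otimes\mathrm{Id}_{W'}&\widetilde B^{(1,2)}\\\widetilde B^{(2,1)}&\mathrm{Id}_W\otimes B_2'\end{pmatrix},\begin{pmatrix}i\otimes\mathrm{Id}_{W'}\\\mathrm{Id}_W\otimes i'\end{pmatrix},\begin{pmatrix}j\otimes\mathrm{Id}_{W'}&\mathrm{Id}_W\otimes j'\end{pmatrix}\Bigr),$$ where $\widetilde B^{(1,2)}\colon W\otimes V'\to V\otimes W'$ and $\widetilde B^{(2,1)}\colon V\otimes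 W'\to W\otimes V'$ are the unique solutions of $(B_1\otimes\mathrm{Id}_{W'})\widetilde B^{(1,2)}-\widetilde B^{(1,2)}(\mathrm{Id}_W\otimes B_1')+i\otimes j'=0$ and $(\mathrm{Id}_W\otimes B_1')\widetilde B^{(2,1)}-\widetilde B^{(2,1)}(B_1\otimes\mathrm{Id}_{W'})+j\otimes i'=0$. *)

From HB Require Import structures.
From mathcomp Require Import all_boot all_order all_algebra.
From mathcomp Require Export mxtens.
Set Implicit Arguments. Unset Strict Implicit. Unset Printing Implicit Defensive.
Import GRing.Theory.
Local Open Scope ring_scope.

(* Conventions: V = F^n, W = F^w, with MathComp's ROW-vector convention:
   a linear map f : X -> Y (dim X = a, dim Y = b) is a matrix M : 'M_(a,b)
   acting by v |-> v *m M, so f \o g corresponds to M_g *m M_f.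
   A datum x = (B1,B2,i,j) in M_{V,W} is:
     B1 B2 : 'M_n  (End V),  i : 'M_(w,n)  (Hom(W,V)),  j : 'M_(n,w) (Hom(V,W)).
   Subspaces of V are row spaces of square matrices S : 'M_n. *)

Definition invariant2 (F : fieldType) (n : nat) (B1 B2 S : 'M[F]_n) : Prop :=
  stablemx S B1 /\ stablemx S B2.

Definition stable (F : fieldType) (n w : nat)
  (B1 B2 : 'M[F]_n) (i : 'M[F]_(w, n)) (j : 'M[F]_(n, w)) : Prop :=
  forall S : 'M[F]_n, (i <= S)%MS -> invariant2 B1 B2 S -> (S :=: 1%:M)%MS.

Definition costable (F : fieldType) (n w : nat)
  (B1 B2 : 'M[F]_n) (i : 'M[F]_(w, n)) (j : 'M[F]_(n, w)) : Prop :=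
  forall S : 'M[F]_n, (S <= kermx j)%MS -> invariant2 B1 B2 S -> S = 0.

Definition no_common_eigenvalue (F : fieldType) (n n' : nat)
  (A : 'M[F]_n) (A' : 'M[F]_n') : Prop :=
  forall a : F, ~ (eigenvalue A a /\ eigenvalue A' a).

(* Bt12 : W (x) V' -> V (x) W' solves
   (B1 (x) Id_W') Bt12 - Bt12 (Id_W (x) B1') + i (x) j' = 0  *)
Definition sylv12 (F : fieldType) (n w n' w' : nat)
  (B1 : 'M[F]_n) (i : 'M[F]_(w, n)) (B1' : 'M[F]_n') (j' : 'M[F]_(n', w'))
  (Bt12 : 'M[F]_(w * n', n * w')) : Prop :=
  Bt12 *m (B1 *t (1%:M : 'M[F]_w')) - (1%:M : 'M[F]_w) *t B1' *m Bt12
    + i *t j' = 0.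

(* Bt21 : V (x) W' -> W (x) V' solves
   (Id_W (x) B1') Bt21 - Bt21 (B1 (x) Id_W') + j (x) i' = 0  *)
Definition sylv21 (F : fieldType) (n w n' w' : nat)
  (B1 : 'M[F]_n) (j : 'M[F]_(n, w)) (B1' : 'M[F]_n') (i' : 'M[F]_(w', n'))
  (Bt21 : 'M[F]_(n * w', w * n')) : Prop :=
  Bt21 *m ((1%:M : 'M[F]_w) *t B1') - B1 *t (1%:M : 'M[F]_w') *m Bt21
    + j *t i' = 0.

(* Components of T(x,x') in M_{Vt,Wt}, Vt = V(x)W' (+) W(x)V', Wt = W(x)W',
   given the solutions Bt12, Bt21 (row-vector convention, hence the
   off-diagonal blocks appear transposed in block_mx). *)
Section T.
Variables (F : fieldType) (n w n' w' : nat).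
Variables (B1 B2 : 'M[F]_n) (i : 'M[F]_(w, n)) (j : 'M[F]_(n, w)).
Variables (B1' B2' : 'M[F]_n') (i' : 'M[F]_(w', n')) (j' : 'M[F]_(n', w')).
Variables (Bt12 : 'M[F]_(w * n', n * w')) (Bt21 : 'M[F]_(n * w', w * n')).

Definition T_B1 : 'M[F]_(n * w' + w * n') :=
  block_mx (B1 *t (1%:M : 'M[F]_w')) 0 0 ((1%:M : 'M[F]_w) *t B1').
Definition T_B2 : 'M[F]_(n * w' + w * n') :=
  block_mx (B2 *t (1%:M : 'M[F]_w')) Bt21 Bt12 ((1%:M : 'M[F]_w) *t B2').
Definition T_i : 'M[F]_(w * w', n * w' + w * n') :=
  row_mx (i *t (1%:M : 'M[F]_w')) ((1%:M : 'M[F]_w) *t i').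
Definition T_j : 'M[F]_(n * w' + w * n', w * w') :=
  col_mx (j *t (1%:M : 'M[F]_w')) ((1%:M : 'M[F]_w) *t j').
End T.

From HB Require Import structures.
From mathcomp Require Import all_boot all_order all_algebra.
Set Implicit Arguments. Unset Strict Implicit. Unset Printing Implicit Defensive.
Import GRing.Theory.
Local Open Scope ring_scope.

(* Since [B1] and [B1'] have no common eigenvalue, neither do the diagonal
   blocks [B1 (x) 1] and [1 (x) B1'] of T_B1, so a polynomial in T_B1 is the
   projection onto the first summand; hence every T_B1-invariant subspace S
   is the direct sum of its two components, and each component is invariant
   under the corresponding diagonal block of T_B2.  A component of S inside
   V (x) W' is then treated slice by slice: for every basis vector e_k of
   W', the preimage of S under v |-> v (x) e_k is (B1, B2)-invariant, so
   stability of x forces it to be V, and costability forces the image of S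
   under the dual slice to vanish; likewise for the component in W (x) V'. *)

(* In the row-vector convention of [*t], [tens_slicer m K k] is
   v |-> v (x) e_k and [tens_slicel m K k] is v |-> e_k (x) v. *)
Definition tens_slicer {F : fieldType} m K (k : 'I_K) : 'M[F]_(m, m * K) :=
  \matrix_(a, b) (b == mxtens_index (a, k))%:R.
Definition tens_slicel {F : fieldType} m K (k : 'I_K) : 'M[F]_(m, K * m) :=
  \matrix_(a, b) (b == mxtens_index (k, a))%:R.
Arguments tens_slicer {F} m K k.
Arguments tens_slicel {F} m K k.

Section TensorSlices.
Variable F : fieldType.

Lemma mxtens_index_eq m K (x y : 'I_m * 'I_K) :
  (mxtens_index x == mxtens_index y) = (x == y).
Proof. exact: (inj_eq (can_inj (@mxtens_indexK m K))). Qed.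

Lemma mul_tens_slicer_mx m K (k : 'I_K) p (M : 'M[F]_(m * K, p)) :
  tens_slicer m K k *m M = \matrix_(a, b) M (mxtens_index (a, k)) b.
Proof.
apply/matrixP => a b; rewrite !mxE (bigD1 (mxtens_index (a, k))) //=.
rewrite mxE eqxx mul1r big1 ?addr0 // => c; rewrite mxE => /negbTE->.
by rewrite mul0r.
Qed.

Lemma mul_tens_slicel_mx m K (k : 'I_K) p (M : 'M[F]_(K * m, p)) :
  tens_slicel m K k *m M = \matrix_(a, b) M (mxtens_index (k, a)) b.
Proof.
apply/matrixP => a b; rewrite !mxE (bigD1 (mxtens_index (k, a))) //=.
rewrite mxE eqxx mul1r big1 ?addr0 // => c; rewrite mxE => /negbTE->.
by rewrite mul0r.
Qed.

Lemma mulmx_tens_slicer p q K k (A : 'M[F]_(p, q)) :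
  A *m tens_slicer q K k = tens_slicer p K k *m (A *t 1%:M).
Proof.
rewrite mul_tens_slicer_mx; apply/matrixP => a b.
case: (mxtens_indexP b) => c l; rewrite !mxE !mxtens_indexK /= (bigD1 c) //=.
rewrite mxE mxtens_index_eq xpair_eqE eqxx big1 ?addr0 => [|d dc].
  by rewrite eq_sym; case: eqP; rewrite ?mulr1 ?mulr0.
by rewrite mxE mxtens_index_eq xpair_eqE eq_sym (negbTE dc) mulr0.
Qed.

Lemma mulmx_tens_slicel p q K k (A : 'M[F]_(p, q)) :
  A *m tens_slicel q K k = tens_slicel p K k *m (1%:M *t A).
Proof.
rewrite mul_tens_slicel_mx; apply/matrixP => a b.
case: (mxtens_indexP b) => l c; rewrite !mxE !mxtens_indexK /= (bigD1 c) //=.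
rewrite mxE mxtens_index_eq xpair_eqE eqxx andbT big1 ?addr0 => [|d dc].
  by rewrite eq_sym; case: eqP; rewrite ?mulr1 ?mul1r ?mulr0 ?mul0r.
by rewrite mxE mxtens_index_eq xpair_eqE [c == d]eq_sym (negbTE dc) andbF mulr0.
Qed.

Lemma tens1_mul_trslicer p q K k (A : 'M[F]_(p, q)) :
  (A *t 1%:M) *m (tens_slicer q K k)^T = (tens_slicer p K k)^T *m A.
Proof.
apply: trmx_inj; rewrite !trmx_mul !trmxK trmx_tens trmx1.
by rewrite mulmx_tens_slicer.
Qed.

Lemma tens1_mul_trslicel p q K k (A : 'M[F]_(p, q)) :
  (1%:M *t A) *m (tens_slicel q K k)^T = (tens_slicel p K k)^T *m A.
Proof.
apply: trmx_inj; rewrite !trmx_mul !trmxK trmx_tens trmx1.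
by rewrite mulmx_tens_slicel.
Qed.

Lemma sum_trslicer_slicer m K :
  \sum_(k < K) (tens_slicer m K k)^T *m tens_slicer m K k = 1%:M :> 'M[F]_(m * K).
Proof.
apply/matrixP => b b'; case: (mxtens_indexP b) => a k.
rewrite summxE (bigD1 k) //= big1 ?addr0 => [|l lk].
  rewrite mxE (bigD1 a) //= big1 ?addr0 => [|c ca].
    by rewrite !mxE eqxx mul1r eq_sym.
  by rewrite !mxE mxtens_index_eq xpair_eqE [a == c]eq_sym (negbTE ca) mul0r.
rewrite mxE big1 // => c _.
by rewrite !mxE mxtens_index_eq xpair_eqE [k == l]eq_sym (negbTE lk) andbF mul0r.
Qed.

Lemma sum_trslicel_slicel m K :
  \sum_(k < K) (tens_slicel m K k)^T *m tens_slicel m K k = 1%:M :> 'M[F]_(K * m).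
Proof.
apply/matrixP => b b'; case: (mxtens_indexP b) => k a.
rewrite summxE (bigD1 k) //= big1 ?addr0 => [|l lk].
  rewrite mxE (bigD1 a) //= big1 ?addr0 => [|c ca].
    by rewrite !mxE eqxx mul1r eq_sym.
  by rewrite !mxE mxtens_index_eq xpair_eqE [a == c]eq_sym (negbTE ca) andbF mul0r.
rewrite mxE big1 // => c _.
by rewrite !mxE mxtens_index_eq xpair_eqE [k == l]eq_sym (negbTE lk) mul0r.
Qed.

End TensorSlices.

Section Transfer.
Variables (F : fieldType) (n N K : nat).
Variables (P : 'I_K -> 'M[F]_(n, N)) (Q : 'I_K -> 'M[F]_(N, n)).
Hypothesis sum_QP : \sum_k Q k *m P k = 1%:M.

Lemma stable_transfer w M (B1 B2 : 'M[F]_n) (i : 'M_(w, n)) (j : 'M_(n, w))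
    (B1t B2t : 'M_N) (it : 'M_(M, N)) :
  (forall k, B1 *m P k = P k *m B1t) -> (forall k, B2 *m P k = P k *m B2t) ->
  (forall k, (i *m P k <= it)%MS) -> stable B1 B2 i j ->
  forall m (S : 'M_(m, N)), (it <= S)%MS -> stablemx S B1t -> stablemx S B2t ->
  (1%:M <= S)%MS.
Proof.
move=> PB1 PB2 iP st m S itS SB1 SB2.
have P_sub k : (P k <= S)%MS.
  pose S0 := kermx (P k *m cokermx S).
  have S0E p (X : 'M_(p, n)) : (X <= S0)%MS = (X *m P k <= S)%MS.
    by rewrite [(X *m P k <= S)%MS]submxE -mulmxA; apply/sub_kermxP/eqP.
  have /eqmxP/andP[_] : (S0 :=: 1%:M)%MS.
    apply: st; first by rewrite S0E (submx_trans (iP k)).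
    have S0P : (S0 *m P k <= S)%MS by rewrite -S0E.
    by split; rewrite S0E -mulmxA ?PB1 ?PB2 mulmxA;
      [apply: submx_trans SB1 | apply: submx_trans SB2]; apply: submxMr.
  by rewrite S0E mul1mx.
rewrite -sum_QP; apply: summx_sub => k _; exact: submx_trans (submxMl _ _) (P_sub k).
Qed.

Lemma costable_transfer w M (B1 B2 : 'M[F]_n) (i : 'M_(w, n)) (j : 'M_(n, w))
    (B1t B2t : 'M_N) (jt : 'M_(N, M)) (R : 'I_K -> 'M_(M, w)) :
  (forall k, B1t *m Q k = Q k *m B1) -> (forall k, B2t *m Q k = Q k *m B2) ->
  (forall k, jt *m R k = Q k *m j) -> costable B1 B2 i j ->
  forall m (S : 'M_(m, N)), (S <= kermx jt)%MS -> stablemx S B1t -> stablemx S B2t ->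
  S = 0.
Proof.
move=> QB1 QB2 jR co m S Sjt SB1 SB2.
have SQ0 k : S *m Q k = 0.
  apply/eqP; rewrite -submx0 -(genmxE (S *m Q k)) (co <<S *m Q k>>%MS) ?sub0mx //.
    by rewrite genmxE; apply/sub_kermxP; rewrite -mulmxA -jR mulmxA (sub_kermxP Sjt) mul0mx.
  by split; rewrite (eqmx_stable _ (genmxE _)) -mulmxA -?QB1 -?QB2 mulmxA submxMr.
by rewrite -[S]mulmx1 -sum_QP mulmx_sumr big1 // => k _; rewrite mulmxA SQ0 mul0mx.
Qed.

Lemma eigenvalue_transfer (B : 'M[F]_n) (Bt : 'M_N) a :
  (forall k, Bt *m Q k = Q k *m B) -> eigenvalue Bt a -> eigenvalue B a.
Proof.
move=> QB /eigenvalueP[v vBt v_neq0].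
have [k vQ_neq0 | vQ0] := pickP (fun k => v *m Q k != 0).
  by apply/eigenvalueP; exists (v *m Q k); rewrite // -mulmxA -QB mulmxA vBt -scalemxAl.
case/eqP: v_neq0; rewrite -[v]mulmx1 -sum_QP mulmx_sumr big1 // => k _.
by rewrite mulmxA (eqP (negbFE (vQ0 k))) mul0mx.
Qed.

End Transfer.

Section BlockSplit.
Variables (F : fieldType) (N1 N2 : nat).

Lemma lsubmxS m1 m2 (A : 'M[F]_(m1, N1 + N2)) (B : 'M_(m2, N1 + N2)) :
  (A <= B)%MS -> (lsubmx A <= lsubmx B)%MS.
Proof. by case/submxP=> X ->; rewrite -[B]hsubmxK mul_mx_row !row_mxKl submxMl. Qed.

Lemma rsubmxS m1 m2 (A : 'M[F]_(m1, N1 + N2)) (B : 'M_(m2, N1 + N2)) :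
  (A <= B)%MS -> (rsubmx A <= rsubmx B)%MS.
Proof. by case/submxP=> X ->; rewrite -[B]hsubmxK mul_mx_row !row_mxKr submxMl. Qed.

Lemma stablemx_lsubmx m (S : 'M[F]_(m, N1 + N2)) X :
  (row_mx (lsubmx S) 0 <= S)%MS -> stablemx S X -> stablemx (lsubmx S) (ulsubmx X).
Proof.
move=> lS SX; have := lsubmxS (submx_trans (submxMr X lS) SX).
by rewrite -[X in row_mx _ 0 *m X]submxK mul_row_block !mul0mx !addr0 row_mxKl.
Qed.

Lemma stablemx_rsubmx m (S : 'M[F]_(m, N1 + N2)) X :
  (row_mx 0 (rsubmx S) <= S)%MS -> stablemx S X -> stablemx (rsubmx S) (drsubmx X).
Proof.
move=> rS SX; have := rsubmxS (submx_trans (submxMr X rS) SX).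
by rewrite -[X in row_mx 0 _ *m X]submxK mul_row_block !mul0mx !add0r row_mxKr.
Qed.

Lemma sub1mx_split m (S : 'M[F]_(m, N1 + N2)) :
  (row_mx (lsubmx S) 0 <= S)%MS -> (row_mx 0 (rsubmx S) <= S)%MS ->
  (1%:M <= lsubmx S)%MS -> (1%:M <= rsubmx S)%MS -> (1%:M <= S)%MS.
Proof.
move=> lS rS /submxP[X X1] /submxP[Y Y1].
rewrite (scalar_mx_block N1 N2 1) block_mxEv col_mx_sub.
apply/andP; split.
  by apply: submx_trans lS; rewrite X1 -(mulmx0 _ X) -mul_mx_row submxMl.
by apply: submx_trans rS; rewrite Y1 -(mulmx0 _ Y) -mul_mx_row submxMl.
Qed.

Lemma lsubmx_sub_kermx m p (S : 'M[F]_(m, N1 + N2)) (J1 : 'M_(N1, p)) J2 :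
  (row_mx (lsubmx S) 0 <= S)%MS -> (S <= kermx (col_mx J1 J2))%MS ->
  (lsubmx S <= kermx J1)%MS.
Proof.
move=> lS /(submx_trans lS)/sub_kermxP.
by rewrite mul_row_col mul0mx addr0 => /sub_kermxP.
Qed.

Lemma rsubmx_sub_kermx m p (S : 'M[F]_(m, N1 + N2)) J1 (J2 : 'M_(N2, p)) :
  (row_mx 0 (rsubmx S) <= S)%MS -> (S <= kermx (col_mx J1 J2))%MS ->
  (rsubmx S <= kermx J2)%MS.
Proof.
move=> rS /(submx_trans rS)/sub_kermxP.
by rewrite mul_row_col mul0mx add0r => /sub_kermxP.
Qed.

End BlockSplit.

Lemma stablemx_horner_block_diag (F : fieldType) p q m
    (A : 'M[F]_p.+1) (D : 'M[F]_q.+1) (S : 'M_(m, p.+1 + q.+1)) r :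
  stablemx S (block_mx A 0 0 D) ->
  stablemx S (block_mx (horner_mx A r) 0 0 (horner_mx D r)).
Proof.
move=> SAD; elim/poly_ind: r => [|r c]; first by rewrite !rmorph0 block_mx0 stablemx0.
rewrite !rmorphD !rmorphM /= !horner_mx_X !horner_mx_C -!mulmxE.
move: (horner_mx A r) (horner_mx D r) => Ar Dr SArDr.
have -> : block_mx (Ar *m A + c%:M) 0 0 (Dr *m D + c%:M) =
          block_mx Ar 0 0 Dr *m block_mx A 0 0 D + c%:M.
  rewrite mulmx_block (scalar_mx_block p.+1 q.+1 c) add_block_mx.
  by rewrite !mulmx0 !mul0mx !addr0 !add0r.
by rewrite stablemxD ?stablemxM ?stablemxC.
Qed.

Lemma no_common_eigenvalue_coprimep (F : closedFieldType) p q
    (A : 'M[F]_p.+1) (D : 'M[F]_q.+1) :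
  no_common_eigenvalue A D -> coprimep (mxminpoly A) (mxminpoly D).
Proof.
move=> AD; apply/negPn/negP; rewrite coprimep_def => /closed_rootP[a].
by rewrite root_gcd -!eigenvalue_root_min => /andP[]; move: (AD a); tauto.
Qed.

Lemma horner_mx_separating (F : closedFieldType) p q (A : 'M[F]_p.+1) (D : 'M[F]_q.+1) :
  no_common_eigenvalue A D -> exists r, horner_mx A r = 1%:M /\ horner_mx D r = 0.
Proof.
move/no_common_eigenvalue_coprimep/Bezout_eq1_coprimepP => [[u v] /= uv1].
exists (v * mxminpoly D); split; last by rewrite rmorphM /= mx_root_minpoly mulr0.
have -> : v * mxminpoly D = 1 - u * mxminpoly A by rewrite -uv1 addrAC subrr add0r.
by rewrite rmorphB rmorphM rmorph1 /= mx_root_minpoly mulr0 subr0.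
Qed.

Lemma stablemx_block_diag_split (F : closedFieldType) N1 N2
    (A : 'M[F]_N1) (D : 'M[F]_N2) m (S : 'M_(m, N1 + N2)) :
  no_common_eigenvalue A D -> stablemx S (block_mx A 0 0 D) ->
  (row_mx (lsubmx S) 0 <= S)%MS /\ (row_mx 0 (rsubmx S) <= S)%MS.
Proof.
move=> AD SAD; suff lS : (row_mx (lsubmx S) 0 <= S)%MS.
  split=> //; have -> : row_mx 0 (rsubmx S) = S - row_mx (lsubmx S) 0.
    by rewrite -{2}[S]hsubmxK opp_row_mx add_row_mx subrr oppr0 addr0.
  by rewrite addmx_sub ?eqmx_opp.
case: N1 A S AD SAD => [|p] A S AD SAD; first by rewrite [lsubmx S]thinmx0 row_mx0 sub0mx.
case: N2 D S AD SAD => [|q] D S AD SAD; first by rewrite -{2}[S]hsubmxK [rsubmx S]thinmx0.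
have [r [Ar1 Dr0]] := horner_mx_separating AD.
have := stablemx_horner_block_diag r SAD; rewrite Ar1 Dr0.
by rewrite -[S in S *m _]hsubmxK mul_row_block !mulmx1 !mulmx0 !addr0.
Qed.

Lemma no_common_eigenvalue_tens (F : fieldType) n n' K L
    (A : 'M[F]_n) (A' : 'M[F]_n') :
  no_common_eigenvalue A A' ->
  no_common_eigenvalue (A *t (1%:M : 'M_K)) ((1%:M : 'M_L) *t A').
Proof.
move=> AA' a [eA eA']; apply: (AA' a); split.
  exact: (eigenvalue_transfer (sum_trslicer_slicer F n K) (fun k => tens1_mul_trslicer k A) eA).
exact: (eigenvalue_transfer (sum_trslicel_slicel F n' L) (fun k => tens1_mul_trslicel k A') eA').
Qed.

Theorem lemma4p5 (F : closedFieldType) (n w n' w' : nat)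
  (B1 B2 : 'M[F]_n) (i : 'M[F]_(w, n)) (j : 'M[F]_(n, w))
  (B1' B2' : 'M[F]_n') (i' : 'M[F]_(w', n')) (j' : 'M[F]_(n', w'))
  (Bt12 : 'M[F]_(w * n', n * w')) (Bt21 : 'M[F]_(n * w', w * n')) :
  no_common_eigenvalue B1 B1' ->
  sylv12 B1 i B1' j' Bt12 ->
  sylv21 B1 j B1' i' Bt21 ->
  (stable B1 B2 i j -> stable B1' B2' i' j' ->
     stable (@T_B1 F n w n' w' B1 B1') (@T_B2 F n w n' w' B2 B2' Bt12 Bt21)
            (@T_i F n w n' w' i i') (@T_j F n w n' w' j j')) /\
  (costable B1 B2 i j -> costable B1' B2' i' j' ->
     costable (@T_B1 F n w n' w' B1 B1') (@T_B2 F n w n' w' B2 B2' Bt12 Bt21)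
            (@T_i F n w n' w' i i') (@T_j F n w n' w' j j')).
Proof.
(* The Sylvester equations only pin down the off-diagonal blocks of T_B2,
   which the argument never uses. *)
move=> B1B1' _ _.
have eigT : no_common_eigenvalue (B1 *t (1%:M : 'M_w')) ((1%:M : 'M_w) *t B1')
  := no_common_eigenvalue_tens B1B1'.
split=> [st st' S iS [SB1 SB2] | co co' S Sj [SB1 SB2]];
  have [lS rS] := stablemx_block_diag_split eigT SB1;
  have := stablemx_lsubmx lS SB1; have := stablemx_lsubmx lS SB2;
  have := stablemx_rsubmx rS SB1; have := stablemx_rsubmx rS SB2;
  rewrite /T_B1 /T_B2 !block_mxKul !block_mxKdr => rSB2 rSB1 lSB2 lSB1.
- apply/eqmxP; rewrite submx1; apply: sub1mx_split lS rS _ _.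
    apply: (stable_transfer (sum_trslicer_slicer F n w') (fun k => mulmx_tens_slicer k B1)
      (fun k => mulmx_tens_slicer k B2) (it := i *t 1%:M) _ st _ lSB1 lSB2).
      by move=> k; rewrite mulmx_tens_slicer submxMl.
    by have := lsubmxS iS; rewrite row_mxKl.
  apply: (stable_transfer (sum_trslicel_slicel F n' w) (fun k => mulmx_tens_slicel k B1')
    (fun k => mulmx_tens_slicel k B2') (it := 1%:M *t i') _ st' _ rSB1 rSB2).
    by move=> k; rewrite mulmx_tens_slicel submxMl.
  by have := rsubmxS iS; rewrite row_mxKr.
- rewrite -[S]hsubmxK.
  rewrite (costable_transfer (sum_trslicer_slicer F n w') (fun k => tens1_mul_trslicer k B1)
    (fun k => tens1_mul_trslicer k B2) (fun k => tens1_mul_trslicer k j) co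
    (lsubmx_sub_kermx lS Sj) lSB1 lSB2).
  by rewrite (costable_transfer (sum_trslicel_slicel F n' w) (fun k => tens1_mul_trslicel k B1')
    (fun k => tens1_mul_trslicel k B2') (fun k => tens1_mul_trslicel k j') co'
    (rsubmx_sub_kermx rS Sj) rSB1 rSB2) row_mx0.
Qed.
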